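(* Let $\Omega$ be finite, $\mathcal P$ the probability functions on $\Omega$, $M$ finite, and $s:\mathcal P\to[-\infty,M]^\Omega$ a proper scoring rule on $\mathcal P$ with $E_p s(p)$ finite for all $p\in\mathcal P$. Let $F=s[\mathcal P]\cap\mathbb R^\Omega$ be the set of finite scores. Suppose that for every convergent sequence $(p_n)$ in $\hat{\mathcal P}$ with $s(p_n)\in F$ for all $n$, we have $\lim_n\langle p_n,s(p_n)\rangle=\langle p,s(p)\rangle$, where $p=\lim_n p_n$. Then $\sigma_F(p)=\langle p,s(p)\rangle$ for all $p\in\hat{\mathcal P}$.
   Context: $\hat{\mathcal P}$ is the set of functions $q:\Omega\to[0,1]$ with $\sum_\omega q(\omega)=1$ (identified with probabilities via $q(\omega)=p(\{\omega\})$), with the Euclidean topology; for $q\in\hat{\mathcal P}$, $s(q)$ means $s$ of the corresponding probability. $\langle f,g\rangle=\sum_\omega f(\omega)\cdot g(\omega)$ for $f\in[0,1]^\Omega$ (or $f\in\mathbb R^\Omega$ when $g$ finite), $g\in[-\infty,\infty)^\Omega$, with the convention $a\cdot0=0\cdot a=0$ for all extended reals $a$; thus $E_p g=\langle\hat p,g\rangle$. $s$ is proper if $E_p s(p)\ge E_p s(q)$ for all probabilities $p,q$. For $F\subseteq\mathbb R^\Omega$ and $v$, $\sigma_F(v)=\sup_{z\in F}\langle v,z\rangle$. *)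

From HB Require Import structures.
From mathcomp Require Import all_boot all_order all_algebra.
From mathcomp Require Import all_classical all_reals all_analysis.
Set Implicit Arguments. Unset Strict Implicit. Unset Printing Implicit Defensive.
Import Order.TTheory GRing.Theory Num.Theory.
Import numFieldNormedType.Exports.
Local Open Scope ring_scope.
Local Open Scope classical_set_scope.
Local Open Scope ereal_scope.

Section Defs.
Variables (R : realType) (Omega : finType).

Definition is_prob (q : Omega -> R) : Prop :=
  (forall w, (0 <= q w)%R) /\ (\sum_(w : Omega) q w)%R = 1%R.

(* <f, g> = sum_w f w * g w, with the convention 0 * (-oo) = 0
   (which is mathcomp-analysis' ereal multiplication convention) *)
Definition ip (f : Omega -> R) (g : Omega -> \bar R) : \bar R :=
  \sum_(w : Omega) ((f w)%:E * g w).

Definition proper_score (s : (Omega -> R) -> Omega -> \bar R) : Prop :=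
  forall p q, is_prob p -> is_prob q -> ip p (s q) <= ip p (s p).

Definition finite_scores (s : (Omega -> R) -> Omega -> \bar R) : set (Omega -> R) :=
  [set z | exists q, is_prob q /\ s q = (fun w => (z w)%:E)].

Definition support_fun (F : set (Omega -> R)) (v : Omega -> R) : \bar R :=
  ereal_sup [set ip v (fun w => (z w)%:E) | z in F].

End Defs.

From HB Require Import structures.
From mathcomp Require Import all_boot all_order all_algebra.
From mathcomp Require Import all_classical all_reals all_analysis.
From mathcomp Require Import ring.
Import Order.TTheory GRing.Theory Num.Theory.
Import numFieldNormedType.Exports.
Local Open Scope ring_scope.
Local Open Scope classical_set_scope.
Local Open Scope ereal_scope.

(* Properness gives sigma_F(p) <= <p, s(p)>.  For the converse, mix p with the
   uniform distribution: p_n = (1 - 1/(n+1)) p + 1/(n+1) u has full support, so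
   the bound s <= M forbids +oo and finiteness of <p_n, s(p_n)> forbids -oo in
   s(p_n); thus s(p_n) is in F.  By linearity in the first argument and s <= M,
   <p_n, s(p_n)> <= (1 - 1/(n+1)) sigma_F(p) + M/(n+1), and the continuity
   hypothesis lets n tend to infinity. *)

Lemma le_of_cvg_convex_bound (R : realType) (e a : nat -> R) (t r M : R) :
  e n @[n --> \oo] --> 0%R -> a n @[n --> \oo] --> t ->
  (forall n, a n <= (1 - e n) * r + e n * M)%R -> (t <= r)%R.
Proof.
move=> e0 at_ le_a.
have bound_r : ((1 - e n) * r + e n * M)%R @[n --> \oo] --> r.
  rewrite [X in _ --> X](_ : r = (1 - 0) * r + 0 * M)%R; last by ring.
  apply: cvgD; apply: cvgM => //; try exact: cvg_cst.
  exact: cvgB (cvg_cst _) e0.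
rewrite -(cvg_lim _ at_) // -(cvg_lim _ bound_r) //.
apply: ler_lim; [by apply/cvg_ex; exists t | by apply/cvg_ex; exists r |].
exact: nearW.
Qed.

Section ProbabilityFunctions.
Set Implicit Arguments.
Unset Strict Implicit.
Variables (R : realType) (Omega : finType).
Implicit Types (p q : Omega -> R) (z : Omega -> R).

Lemma ipEFin p z : ip p (fun w => (z w)%:E) = (\sum_w p w * z w)%:E.
Proof. by rewrite /ip -sumEFin; apply: eq_bigr => w _; rewrite EFinM. Qed.

Lemma is_prob_card_gt0 p : is_prob p -> (0 < #|Omega|)%N.
Proof.
case=> _ sum1; rewrite lt0n; apply/eqP => /card0_eq Omega0.
by move: sum1; rewrite big_pred0 // => /eqP; rewrite eq_sym oner_eq0.
Qed.

Definition uniform_prob : Omega -> R := fun=> ((#|Omega|%:R)^-1)%R.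

Lemma is_prob_uniform : (0 < #|Omega|)%N -> is_prob uniform_prob.
Proof.
move=> Omega_gt0; split=> [w|]; first by rewrite invr_ge0 ler0n.
by rewrite /uniform_prob sumr_const -[RHS](@mulVf _ #|Omega|%:R) ?mulr_natr // pnatr_eq0 -lt0n.
Qed.

Lemma uniform_prob_gt0 w : (0 < uniform_prob w)%R.
Proof. by rewrite invr_gt0 ltr0n; apply/card_gt0P; exists w. Qed.

Definition mix_prob (e : R) p q : Omega -> R := fun w => ((1 - e) * p w + e * q w)%R.

Lemma is_prob_mix (e : R) p q :
  (0 <= e <= 1)%R -> is_prob p -> is_prob q -> is_prob (mix_prob e p q).
Proof.
move=> /andP[e0 e1] [p0 p1] [q0 q1]; split=> [w|].
  by rewrite addr_ge0 // mulr_ge0 // subr_ge0.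
by rewrite big_split /= -!mulr_sumr p1 q1; ring.
Qed.

Lemma mix_prob_gt0 (e : R) p q w :
  (0 < e <= 1)%R -> is_prob p -> (0 < q w)%R -> (0 < mix_prob e p q w)%R.
Proof.
move=> /andP[e0 e1] [p0 _] qw0; apply: ltr_pwDr; first by rewrite mulr_gt0.
by rewrite mulr_ge0 // subr_ge0.
Qed.

Lemma sum_mix_prob (e : R) p q z :
  (\sum_w mix_prob e p q w * z w =
     (1 - e) * (\sum_w p w * z w) + e * (\sum_w q w * z w))%R.
Proof.
by rewrite !mulr_sumr -big_split /=; apply: eq_bigr => w _; rewrite /mix_prob; ring.
Qed.

Lemma expectation_le_bound p z (M : R) :
  is_prob p -> (forall w, z w <= M)%R -> (\sum_w p w * z w <= M)%R.
Proof.
move=> [p0 p1] zM; rewrite -[M]mul1r -p1 mulr_suml.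
by apply: ler_sum => w _; apply: ler_wpM2l.
Qed.

Lemma sum_mix_prob_le (e r M : R) p q z :
  (0 <= e <= 1)%R -> is_prob q -> (forall w, z w <= M)%R ->
  (\sum_w p w * z w <= r)%R ->
  (\sum_w mix_prob e p q w * z w <= (1 - e) * r + e * M)%R.
Proof.
move=> /andP[e0 e1] qP zM pz_le_r; rewrite sum_mix_prob.
by apply: lerD; apply: ler_wpM2l; rewrite ?subr_ge0 //; apply: expectation_le_bound.
Qed.

Lemma cvg_mix_prob (e : nat -> R) p q w :
  e n @[n --> \oo] --> 0%R -> mix_prob (e n) p q w @[n --> \oo] --> p w.
Proof.
move=> e0; rewrite [X in _ --> X](_ : p w = (1 - 0) * p w + 0 * q w)%R; last by ring.
apply: cvgD; apply: cvgM => //; try exact: cvg_cst.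
exact: cvgB (cvg_cst _) e0.
Qed.


Lemma ip_le_support_fun (F : set (Omega -> R)) p z :
  F z -> ip p (fun w => (z w)%:E) <= support_fun F p.
Proof. by move=> Fz; apply: ereal_sup_ubound; exists z. Qed.

Section Scores.
Variables (s : (Omega -> R) -> Omega -> \bar R) (M : R).
Hypothesis s_le_M : forall p, is_prob p -> forall w, s p w <= M%:E.
Hypothesis ip_score_fin : forall p, is_prob p -> ip p (s p) \is a fin_num.

Lemma support_fun_le_ip_score p :
  proper_score s -> is_prob p -> support_fun (finite_scores s) p <= ip p (s p).
Proof.
by move=> s_proper pP; apply: ge_ereal_sup => _ [z [q [qP <-]] <-]; apply: s_proper.
Qed.

(* A value -oo at a point of positive mass would make <q, s(q)> = -oo. *)
Lemma score_finite_of_pos q :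
  is_prob q -> (forall w, (0 < q w)%R) ->
  s q = (fun w => (fine (s q w))%:E).
Proof.
move=> qP q_gt0; apply: funext => w; case sqw: (s q w) => [r| |] //.
  by have := s_le_M qP w; rewrite sqw.
have := ip_score_fin qP; rewrite fin_numE => /andP[/eqP []].
apply/eqP; rewrite /ip esum_eqNy; apply/existsP; exists w.
by rewrite sqw mulrNy gtr0_sg ?q_gt0 // mul1e.
Qed.

Lemma finite_scores_of_pos q :
  is_prob q -> (forall w, (0 < q w)%R) ->
  exists2 z, finite_scores s z & s q = (fun w => (z w)%:E).
Proof.
move=> qP q_gt0; have sqE := score_finite_of_pos qP q_gt0.
by exists (fun w => fine (s q w)) => //; exists q.
Qed.

End Scores.
End ProbabilityFunctions.

Arguments uniform_prob {R Omega}.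
Arguments is_prob_uniform {R Omega}.
Arguments uniform_prob_gt0 {R Omega}.

Theorem lemma2 (R : realType) (Omega : finType) (M : R)
    (s : (Omega -> R) -> Omega -> \bar R)
    (hM : forall p, is_prob p -> forall w, s p w <= M%:E)
    (hproper : proper_score s)
    (hfin : forall p, is_prob p -> ip p (s p) \is a fin_num)
    (hcont : forall (pn : nat -> Omega -> R) (p : Omega -> R),
        (forall n, is_prob (pn n)) ->
        (forall w, (fun n => pn n w) @ \oo --> p w) ->
        (forall n, exists2 z, finite_scores s z & s (pn n) = (fun w => (z w)%:E)) ->
        (fun n => ip (pn n) (s (pn n))) @ \oo --> ip p (s p)) :
  forall p : Omega -> R, is_prob p -> support_fun (finite_scores s) p = ip p (s p).
Proof.
move=> p pP.
have ub := support_fun_le_ip_score hproper pP.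
have ipE : ip p (s p) = (fine (ip p (s p)))%:E by rewrite fineK ?hfin.
have uP : is_prob (uniform_prob : Omega -> R) := is_prob_uniform (is_prob_card_gt0 pP).
pose e n : R := ((n.+1%:R)^-1)%R.
have e_range n : (0 < e n <= 1)%R by rewrite invr_gt0 ltr0n invf_le1 ?ler1n ?ltr0n.
have e_bounds n : (0 <= e n <= 1)%R by case/andP: (e_range n) => /ltW -> ->.
have e_cvg : e n @[n --> \oo] --> 0%R := cvg_harmonic.
pose pn n := mix_prob (e n) p uniform_prob.
have pnP n : is_prob (pn n) := is_prob_mix (e_bounds n) pP uP.
have pn_gt0 n w : (0 < pn n w)%R := mix_prob_gt0 (e_range n) pP (uniform_prob_gt0 w).
pose z n w := fine (s (pn n) w).
have snE n : s (pn n) = (fun w => (z n w)%:E) := score_finite_of_pos hM hfin (pnP n) (pn_gt0 n).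
have lim := hcont pn p pnP (fun w => cvg_mix_prob uniform_prob e_cvg)
  (fun n => finite_scores_of_pos hM hfin (pnP n) (pn_gt0 n)).
have lb n : (\sum_w p w * z n w)%:E <= support_fun (finite_scores s) p.
  by rewrite -ipEFin; apply: ip_le_support_fun; exists (pn n).
move: ub lb; rewrite ipE; case: (support_fun _ _) => [r| |] //; last first.
  by move=> _ /(_ 0%N).
rewrite lee_fin => ub lb; apply/eqP; rewrite eq_le lee_fin ub /=.
apply: (@le_of_cvg_convex_bound R e (fun n => \sum_w pn n w * z n w)%R _ _ M e_cvg).
  move: lim; rewrite ipE => /fine_cvg; apply: cvg_trans; apply: near_eq_cvg.
  by apply: nearW => n /=; rewrite snE ipEFin.
move=> n; apply: sum_mix_prob_le (e_bounds n) uP _ _; last by rewrite -lee_fin.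
by move=> w; have := hM _ (pnP n) w; rewrite snE lee_fin.
Qed.
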